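(* If $q$ is a prime power, then there exists a $(q,q+1;8)$-bipartite biregular graph of order $(2q+1)(q^2-1)$. In particular, for $q=3$ there exists a $(3,4;8)$-bipartite biregular cage on $56$ vertices, i.e. $B_c(3,4;8)=56$.
   Context: For integers $a,b\geq 2$ and even $g\ge4$, an $(a,b;g)$-bipartite biregular graph is a finite simple bipartite graph of girth exactly $g$ in which all vertices of one bipartition class have degree $a$ and all vertices of the other class have degree $b$. An $(a,b;g)$-bipartite biregular cage is such a graph of minimum possible order, and $B_c(a,b;g)$ denotes this minimum order. *)

From mathcomp Require Import all_boot.
Set Implicit Arguments. Unset Strict Implicit. Unset Printing Implicit Defensive.

Definition simple_graph (n : nat) (e : rel 'I_n) : Prop :=
  symmetric e /\ irreflexive e.

Definition deg (n : nat) (e : rel 'I_n) (x : 'I_n) : nat := #|[set y | e x y]|.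

Definition is_cycle (n : nat) (e : rel 'I_n) (c : seq 'I_n) : Prop :=
  3 <= size c /\ ucycle e c.

Definition has_girth (n : nat) (e : rel 'I_n) (g : nat) : Prop :=
  (exists c, is_cycle e c /\ size c = g) /\
  (forall c, is_cycle e c -> g <= size c).

Definition bipartite_biregular (n : nat) (e : rel 'I_n) (a b : nat) : Prop :=
  exists A : {set 'I_n},
    (forall x y, e x y -> (x \in A) != (y \in A)) /\
    (forall x, x \in A -> deg e x = a) /\
    (forall x, x \notin A -> deg e x = b).

Definition bbg_exists (a b g n : nat) : Prop :=
  exists e : rel 'I_n,
    simple_graph e /\ bipartite_biregular e a b /\ has_girth e g.

Definition Bc_is (a b g n : nat) : Prop :=
  bbg_exists a b g n /\ (forall m, bbg_exists a b g m -> n <= m).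

Definition prime_power (q : nat) : Prop :=
  exists p k, prime p /\ 0 < k /\ q = p ^ k.

(* Construction: a point is a pair (u, w) of a point u of the projective line
   over F_q and a nonzero vector w of F_q^2, a line is a 2x2 matrix M of
   determinant -1, and (u, w) lies on M when M u = w.  A line has one point over
   each u and a point lies on q lines, so double counting gives the order
   (q + 1)(q^2 - 1) + q(q^2 - 1).  A matrix is fixed by its values at two
   independent vectors, so two points lie on at most one line (no 4-cycles);
   two points on a line satisfy det(w, w') = -det(u, u'), which determines the
   vector of any point collinear with both, so the points of a triangle lie on
   one line (no 6-cycles).

   Lower bound: in a (3,4;8)-graph with classes A of degree 3 and B of degree 4,
   3|A| = 4|B|, and the vertices at distance 1 and 3 from a vertex of A are
   21 distinct vertices of B.  If |B| = 21 every vertex of B is within distance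
   3 of every vertex of A; then the collinearity graph on B is strongly regular
   with parameters (21, 8, 1, 4), whose eigenvalue 1 would have the non-integral
   multiplicity 504/35.  Hence |B| >= 24, |A| >= 32 and the order is >= 56. *)

From mathcomp Require Import all_boot all_algebra finfield zify ring.
Set Implicit Arguments. Unset Strict Implicit. Unset Printing Implicit Defensive.
Import GRing.Theory Num.Theory.

Lemma double_count (T U : finType) (r : T -> U -> bool) :
  \sum_x #|[set y | r x y]| = \sum_y #|[set x | r x y]|.
Proof.
under eq_bigr do rewrite -sum1dep_card big_mkcond.
rewrite exchange_big; apply: eq_bigr => y _.
by rewrite -sum1dep_card [RHS]big_mkcond.
Qed.

Lemma card_disjoint_bigcup (T I : finType) (F : I -> {set T}) :
  (forall i j, i != j -> [disjoint F i & F j]) -> #|\bigcup_i F i| = \sum_i #|F i|.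
Proof.
move=> disjF; rewrite -sum1_card (partition_disjoint_bigcup _ _ disjF).
by apply: eq_bigr => i _; rewrite sum1_card.
Qed.

Lemma disjoint_setP (T : finType) (B C : {set T}) :
  (forall x, x \in B -> x \in C -> False) -> [disjoint B & C].
Proof. by move=> BC; apply/pred0P => x /=; apply/negbTE/andP => -[/BC]. Qed.

Lemma mxtrace_idempotent (F : fieldType) m (E : 'M[F]_m) :
  (E *m E = E -> \tr E = (\rank E)%:R)%R.
Proof.
move=> EE; rewrite -[in LHS](mulmx_base E) mxtrace_mulC.
suff -> : (row_base E *m col_base E = 1%:M)%R by rewrite mxtrace1.
apply: (row_free_inj (row_base_free E)) => /=.
apply: (row_full_inj (col_base_full E)) => /=.
rewrite mul1mx (mulmxA _ (_ *m _) (row_base E)) (mulmxA _ (row_base E)) mulmx_base.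
by rewrite -(mulmxA E) mulmx_base EE.
Qed.

Lemma sum_enum_val_card (T : finType) (S : {set T}) (P : pred T) :
  (forall z, P z -> z \in S) -> \sum_(j < #|S|) P (enum_val j) = #|[set z | P z]|.
Proof.
move=> PS; rewrite -(big_enum_val (A := mem S) (fun z => nat_of_bool (P z))) -sum1dep_card.
rewrite big_mkcond [RHS]big_mkcond; apply: eq_bigr => z _.
by case: (boolP (P z)) => [/PS -> | _]; case: (z \in S).
Qed.

Ltac split_andb_hyps := repeat match goal with
  | H : is_true (_ && _) |- _ => case/andP: H => ? ? end.

Section BipartiteGirth.
Variables (T : eqType) (e : rel T) (side : T -> bool).
Hypothesis e_side : forall x y, e x y -> side x != side y.

Definition C4_free := forall a b c d,
  e a b -> e b c -> e c d -> e d a -> a != c -> b != d -> False.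

Definition C6_free := forall a b c d f g,
  e a b -> e b c -> e c d -> e d f -> e f g -> e g a ->
  a != c -> c != f -> a != f -> b != d -> d != g -> b != g -> False.

Definition girth_ge8 := forall c, 3 <= size c -> ucycle e c -> 8 <= size c.

Lemma neq_side x y : e x y -> x != y.
Proof. by move/e_side; apply: contraNneq => ->. Qed.

Lemma path_side x p : path e x p -> side (last x p) = side x (+) odd (size p).
Proof.
elim: p x => [|y p IHp] x /=; first by rewrite addbF.
case/andP=> /e_side xy /IHp ->; move: xy.
by case: (side x); case: (side y); rewrite //= ?negbK.
Qed.

Lemma cycle_size_even c : cycle e c -> ~~ odd (size c).
Proof.
case: c => [|x p] //= /path_side; rewrite last_rcons size_rcons /=.
by case: (side x); case: (odd (size p)).
Qed.

Lemma C4_C6_free_girth_ge8 : C4_free -> C6_free -> girth_ge8.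
Proof.
move=> noC4 noC6 c c_ge3 /andP[c_cycle c_uniq].
rewrite leqNgt; apply/negP => c_lt8.
have c_even := cycle_size_even c_cycle; move: c_ge3 c_lt8 c_even c_cycle c_uniq.
case: c => [|x1 [|x2 [|x3 [|x4 [|x5 [|x6 [|x7 [|x8 c]]]]]]]] //= _ _ _;
  rewrite ?inE ?negb_or => c_cycle c_uniq; split_andb_hyps.
- exact: (noC4 x1 x2 x3 x4).
- exact: (noC6 x1 x2 x3 x4 x5 x6).
Qed.

Lemma neq_side3 x y z w : e x y -> e y z -> e z w -> x != w.
Proof.
move=> /e_side exy /e_side eyz /e_side ezw; apply: contraNneq ezw => <-.
by move: exy eyz; case: (side x); case: (side y); case: (side z).
Qed.

Lemma girth_ge8_C4_free : girth_ge8 -> C4_free.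
Proof.
move=> g8 x1 x2 x3 x4 e12 e23 e34 e41 n13 n24.
have := g8 [:: x1; x2; x3; x4] isT.
rewrite /ucycle /= e12 e23 e34 e41 !inE !negb_or n13 n24.
rewrite (neq_side e12) (neq_side e23) (neq_side e34) (eq_sym x1 x4) (neq_side e41).
by move=> /(_ isT).
Qed.

Lemma girth_ge8_C6_free : girth_ge8 -> C6_free.
Proof.
move=> g8 x1 x2 x3 x4 x5 x6 e12 e23 e34 e45 e56 e61 n13 n35 n15 n24 n46 n26.
have := g8 [:: x1; x2; x3; x4; x5; x6] isT.
rewrite /ucycle /= e12 e23 e34 e45 e56 e61 !inE !negb_or n13 n15 n24 n26 n35 n46.
rewrite (neq_side e12) (neq_side e23) (neq_side e34) (neq_side e45) (neq_side e56).
rewrite (eq_sym x1 x6) (neq_side e61) (neq_side3 e12 e23 e34).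
by rewrite (neq_side3 e23 e34 e45) (neq_side3 e34 e45 e56) => /(_ isT).
Qed.

End BipartiteGirth.

Lemma card_preim_enum_val (T : finType) (S : {set T}) :
  #|[set j : 'I_#|T| | enum_val j \in S]| = #|S|.
Proof.
rewrite -(card_imset S enum_rank_inj); apply: eq_card => j.
rewrite inE; apply/idP/imsetP => [jS | [y yS ->]]; last by rewrite enum_rankK.
by exists (enum_val j); rewrite ?enum_valK.
Qed.

Lemma bbg_exists_finType (T : finType) (e : rel T) (A : {set T}) (a b g : nat) :
  symmetric e -> irreflexive e -> (forall x y, e x y -> (x \in A) != (y \in A)) ->
  {in A, forall x, #|[set y | e x y]| = a} ->
  {in ~: A, forall x, #|[set y | e x y]| = b} ->
  (exists c, [/\ 3 <= size c, ucycle e c & size c = g]) ->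
  (forall c, 3 <= size c -> ucycle e c -> g <= size c) ->
  bbg_exists a b g #|T|.
Proof.
move=> e_sym e_irr e_side degA degB [c0 [c0_ge3 c0_cycle c0_size]] girth.
pose e' : rel 'I_#|T| := fun i j => e (enum_val i) (enum_val j).
have deg_e' i : deg e' i = #|[set y | e (enum_val i) y]|.
  by rewrite -card_preim_enum_val; apply: eq_card => j; rewrite !inE.
exists e'; split; [split => [i j | i]; exact: e_sym || exact: e_irr | split].
  exists [set i | enum_val i \in A]; split; [|split] => i; rewrite ?inE ?deg_e'.
  - by move=> j; rewrite inE; apply: e_side.
  - exact: degA.
  - by move=> iNA; apply: degB; rewrite inE.
split.
  exists (map enum_rank c0); split; [split|]; rewrite ?size_map //.
  move: c0_cycle; rewrite /ucycle cycle_map (map_inj_uniq enum_rank_inj).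
  by congr (is_true (_ && _)); apply: eq_cycle => x y; rewrite /e' /= !enum_rankK.
move=> c [c_ge3 c_cycle]; rewrite -(size_map enum_val); apply: girth.
  by rewrite size_map.
by move: c_cycle; rewrite /ucycle cycle_map (map_inj_uniq enum_val_inj).
Qed.

Section Plane.
Local Open Scope ring_scope.
Variable F : fieldType.

Definition det2 (v w : F * F) : F := v.1 * w.2 - v.2 * w.1.

(* [(a, b, c, d)] stands for the matrix [[a, b], [c, d]]. *)
Definition mx2 := (F * F * F * F)%type.

Definition mx2v (M : mx2) (v : F * F) : F * F :=
  let: (a, b, c, d) := M in (a * v.1 + b * v.2, c * v.1 + d * v.2).

Definition det_mx2 (M : mx2) : F := let: (a, b, c, d) := M in a * d - b * c.

Lemma det2_mx2v M v w : det2 (mx2v M v) (mx2v M w) = det_mx2 M * det2 v w.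
Proof.
by case: M => [[[a b] c] d]; case: v => v1 v2; case: w => w1 w2; rewrite /det2 /=; ring.
Qed.

Lemma det2_lin_indep (x y : F) (v w : F * F) : det2 v w != 0 ->
  x * v.1 + y * v.2 = 0 -> x * w.1 + y * w.2 = 0 -> x = 0 /\ y = 0.
Proof.
case: v => v1 v2; case: w => w1 w2; rewrite /det2 /= => vw hv hw.
have /eqP : x * (v1 * w2 - v2 * w1) = 0.
  transitivity (w2 * (x * v1 + y * v2) - v2 * (x * w1 + y * w2)); first by ring.
  by rewrite hv hw; ring.
have /eqP : y * (v1 * w2 - v2 * w1) = 0.
  transitivity (v1 * (x * w1 + y * w2) - w1 * (x * v1 + y * v2)); first by ring.
  by rewrite hv hw; ring.
by rewrite !mulf_eq0 (negbTE vw) !orbF => /eqP-> /eqP->.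
Qed.

Lemma mx2v_basis_inj M N v w : det2 v w != 0 ->
  mx2v M v = mx2v N v -> mx2v M w = mx2v N w -> M = N.
Proof.
case: M N => [[[a b] c] d] [[[a' b'] c'] d'] vw /= [Mv1 Mv2] [Mw1 Mw2].
have sub0 (s t s' t' : F) : s + t = s' + t' -> s - s' + (t - t') = 0.
  by move=> st; rewrite addrACA st -opprD subrr.
have [/eqP ea /eqP eb] : a - a' = 0 /\ b - b' = 0.
  by apply: (det2_lin_indep vw); rewrite !mulrBl sub0.
have [/eqP ec /eqP ed] : c - c' = 0 /\ d - d' = 0.
  by apply: (det2_lin_indep vw); rewrite !mulrBl sub0.
by move: ea eb ec ed; rewrite !subr_eq0 => /eqP-> /eqP-> /eqP-> /eqP->.
Qed.

Lemma det2_basis_inj z z' w1 w2 : det2 w1 w2 != 0 ->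
  det2 z w1 = det2 z' w1 -> det2 z w2 = det2 z' w2 -> z = z'.
Proof.
case: z z' w1 w2 => [z1 z2] [z1' z2'] [a1 a2] [b1 b2] w12 e1 e2.
have w12' : det2 (a2, - a1) (b2, - b1) != 0.
  by move: w12; rewrite /det2 /= mulrN mulNr opprK addrC.
have [/eqP ex /eqP ey] : z1 - z1' = 0 /\ z2 - z2' = 0.
  apply: (det2_lin_indep w12') => /=.
    transitivity (det2 (z1, z2) (a1, a2) - det2 (z1', z2') (a1, a2)).
      by rewrite /det2 /=; ring.
    by rewrite e1 subrr.
  transitivity (det2 (z1, z2) (b1, b2) - det2 (z1', z2') (b1, b2)).
    by rewrite /det2 /=; ring.
  by rewrite e2 subrr.
by move: ex ey; rewrite !subr_eq0 => /eqP-> /eqP->.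
Qed.

End Plane.

Section IncidenceGraph.
Local Open Scope ring_scope.
Variable F : finFieldType.

Definition proj_rep (u : option F) : F * F := if u is Some x then (1, x) else (0, 1).

Lemma det2_proj_rep u u' : u != u' -> det2 (proj_rep u) (proj_rep u') != 0.
Proof.
case: u u' => [x|] [y|] //= uu'; rewrite /det2 /= ?mul1r ?mulr1 ?mul0r ?mulr0.
- by rewrite subr_eq0; apply: contraNneq uu' => ->.
- by rewrite subr0 oner_eq0.
- by rewrite sub0r oppr_eq0 oner_eq0.
Qed.

Definition nzvec := {w : F * F | w != (0, 0)}.
Definition point := (option F * nzvec)%type.
Definition line := {M : mx2 F | det_mx2 M == -1}.
Definition vertex := (point + line)%type.

(* The point [(u, w)] stands for the vector [w] sitting over the point [u] of
   the projective line; the line [M] consists of the [q + 1] points [(u, M u)]. *)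
Definition incident (p : point) (M : line) : bool :=
  mx2v (val M) (proj_rep p.1) == val p.2.

Definition incidence : rel vertex := fun x y =>
  match x, y with
  | inl p, inr M | inr M, inl p => incident p M
  | _, _ => false
  end.

Definition is_point (x : vertex) : bool := if x is inl _ then true else false.

Lemma incidence_sym : symmetric incidence. Proof. by case=> ? [] ?. Qed.
Lemma incidence_irr : irreflexive incidence. Proof. by case. Qed.
Lemma incidence_side x y : incidence x y -> is_point x != is_point y.
Proof. by case: x y => ? [] ?. Qed.

Lemma incident_point_eq p p' M :
  incident p M -> incident p' M -> p.1 = p'.1 -> p = p'.
Proof.
case: p p' => [u w] [u' w'] /= /eqP pM /eqP p'M uu'; subst u'.
by congr pair; apply: val_inj; rewrite -pM -p'M.
Qed.

Lemma incident_line_uniq p p' M N : incident p M -> incident p' M ->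
  incident p N -> incident p' N -> p != p' -> M = N.
Proof.
move=> pM p'M pN p'N pp'.
have [uu'|uu'] := eqVneq p.1 p'.1; first by rewrite (incident_point_eq pM p'M uu') eqxx in pp'.
apply: val_inj; apply: (mx2v_basis_inj (det2_proj_rep uu')).
  by rewrite (eqP pM) (eqP pN).
by rewrite (eqP p'M) (eqP p'N).
Qed.

Lemma det2_incident p p' M : incident p M -> incident p' M ->
  det2 (val p.2) (val p'.2) = - det2 (proj_rep p.1) (proj_rep p'.1).
Proof. by move=> /eqP <- /eqP <-; rewrite det2_mx2v (eqP (valP M)) mulN1r. Qed.

(* The vector of a point is determined by its determinants with those of two
   points of a line; hence a point collinear with two points of [M1] is on [M1]. *)
Lemma incident_triangle p1 p2 p3 M1 M2 M3 :
  incident p1 M1 -> incident p2 M1 -> incident p2 M2 -> incident p3 M2 ->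
  incident p3 M3 -> incident p1 M3 -> p1 != p2 -> incident p3 M1.
Proof.
move=> p1M1 p2M1 p2M2 p3M2 p3M3 p1M3 p12.
have u12 : p1.1 != p2.1 by apply: contraNneq p12 => /(incident_point_eq p1M1 p2M1) ->.
apply/eqP; apply: (det2_basis_inj (w1 := val p1.2) (w2 := val p2.2)).
- by rewrite (det2_incident p1M1 p2M1) oppr_eq0 det2_proj_rep.
- by rewrite -[in LHS](eqP p1M1) det2_mx2v (eqP (valP M1)) mulN1r (det2_incident p3M3 p1M3).
- by rewrite -[in LHS](eqP p2M1) det2_mx2v (eqP (valP M1)) mulN1r (det2_incident p3M2 p2M2).
Qed.

Lemma incidence_C4_free : C4_free incidence.
Proof.
move=> [p|M] [q|N] [r|K] [s|O] //=; rewrite !(inj_eq inl_inj, inj_eq inr_inj).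
  move=> pN rN rK pK pr NK.
  by move: NK; rewrite (incident_line_uniq pN rN pK rK pr) eqxx.
move=> qM qK sK sM MK qs.
by move: MK; rewrite (incident_line_uniq qM sM qK sK qs) eqxx.
Qed.

Lemma incidence_C6_free : C6_free incidence.
Proof.
move=> [p1|M1] [p2|M2] [p3|M3] [p4|M4] [p5|M5] [p6|M6] //=;
  rewrite !(inj_eq inl_inj, inj_eq inr_inj).
  move=> p1M2 p3M2 p3M4 p5M4 p5M6 p1M6 p13 p35 _ M24 _ _.
  have p5M2 := incident_triangle p1M2 p3M2 p3M4 p5M4 p5M6 p1M6 p13.
  by move: M24; rewrite (incident_line_uniq p3M2 p5M2 p3M4 p5M4 p35) eqxx.
move=> p2M1 p2M3 p4M3 p4M5 p6M5 p6M1 M13 _ _ p24 _ p26.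
have p6M3 := incident_triangle p2M3 p4M3 p4M5 p6M5 p6M1 p2M1 p24.
by move: M13; rewrite (incident_line_uniq p2M1 p6M1 p2M3 p6M3 p26) eqxx.
Qed.

Lemma mx2v_proj_rep_neq0 (M : line) u : mx2v (val M) (proj_rep u) != (0, 0).
Proof.
pose u' : option F := if u is None then Some 0 else None.
have /det2_proj_rep : u != u' by rewrite /u'; case: (u).
apply: contra => /eqP Mu0; rewrite -oppr_eq0 -mulN1r -(eqP (valP M)) -det2_mx2v Mu0.
by rewrite /det2 !mul0r subr0.
Qed.

Definition point_on (M : line) (u : option F) : point :=
  (u, exist _ (mx2v (val M) (proj_rep u)) (mx2v_proj_rep_neq0 M u)).

Lemma card_incident_points M : #|[set p | incident p M]| = #|F|.+1.
Proof.
have -> : [set p | incident p M] = [set point_on M u | u : option F].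
  apply/setP => [[u w]]; rewrite inE /incident /=; apply/eqP/imsetP => [Mu | [u' _ [-> ->]]] //.
  by exists u => //; congr pair; apply: val_inj.
by rewrite card_imset ?card_option // => u u' [].
Qed.

Lemma card_det2_eq (v : F * F) (c : F) :
  v != (0, 0) -> #|[set s | det2 v s == c]| = #|F|.
Proof.
case: v => v1 v2 v_neq0; rewrite /det2 /=.
have [v20|v2_neq0] := eqVneq v2 0.
  have v1_neq0 : v1 != 0 by move: v_neq0; rewrite v20 xpair_eqE eqxx andbT.
  have -> : [set s | v1 * s.2 - v2 * s.1 == c] = [set (t, c / v1) | t : F].
    apply/setP => -[s1 s2]; rewrite v20 inE mul0r subr0; apply/eqP/imsetP.
      by move=> <-; exists s1; rewrite // mulrC mulKf.
    by case=> t _ [-> ->]; rewrite mulrCA mulfV ?mulr1.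
  by rewrite card_imset // => t t' [].
have -> : [set s | v1 * s.2 - v2 * s.1 == c] = [set ((v1 * t - c) / v2, t) | t : F].
  apply/setP => -[s1 s2]; rewrite inE; apply/eqP/imsetP.
    by move=> <-; exists s2; rewrite // opprB addrC subrK mulrC mulKf.
  by case=> t _ [-> ->]; rewrite mulrCA mulfV // mulr1 opprB addrC subrK.
by rewrite card_imset // => t t' [].
Qed.

(* The matrices sending [proj_rep u] to [w], parametrised by a free column [s]
   so that the determinant becomes [det2 w s]. *)
Definition mx2_through (u : option F) (w s : F * F) : mx2 F :=
  if u is Some x then (w.1 - s.1 * x, s.1, w.2 - s.2 * x, s.2)
  else (- s.1, w.1, - s.2, w.2).

Definition free_col (u : option F) (M : mx2 F) : F * F :=
  let: (a, b, c, d) := M in if u is Some _ then (b, d) else (- a, - c).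

Lemma det_mx2_through u w s : det_mx2 (mx2_through u w s) = det2 w s.
Proof. by case: u => [x|]; rewrite /det2 /=; ring. Qed.

Lemma mx2v_through u w s : mx2v (mx2_through u w s) (proj_rep u) = w.
Proof. by case: w => w1 w2; case: u => [x|] /=; congr pair; ring. Qed.

Lemma mx2_throughK u w M : mx2v M (proj_rep u) = w -> mx2_through u w (free_col u M) = M.
Proof. by case: M => [[[a b] c] d]; case: u => [x|] /= <- /=; congr (_, _, _, _); ring. Qed.

Lemma free_col_through u w s : free_col u (mx2_through u w s) = s.
Proof. by case: u => [x|]; case: s => s1 s2; rewrite /= ?opprK. Qed.

Lemma card_incident_lines p : #|[set M | incident p M]| = #|F|.
Proof.
case: p => u w; rewrite -(card_det2_eq (-1) (valP w)) /incident /=.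
rewrite -(card_in_imset (f := fun M : line => free_col u (val M))).
  apply: eq_card => s; rewrite [in RHS]inE; apply/imsetP/eqP.
    case=> M; rewrite inE => /eqP Mu ->.
    by rewrite -(det_mx2_through u) (mx2_throughK Mu) (eqP (valP M)).
  move=> ws; have detM : det_mx2 (mx2_through u (val w) s) == -1.
    by rewrite det_mx2_through ws.
  by exists (exist (fun M => det_mx2 M == -1) _ detM); rewrite ?inE /= ?mx2v_through ?free_col_through.
move=> M N; rewrite !inE => /eqP Mu /eqP Nu MN; apply: val_inj.
by rewrite -[val M](mx2_throughK Mu) -[val N](mx2_throughK Nu) MN.
Qed.

Lemma card_point : #|{: point}| = (#|F|.+1 * (#|F| * #|F| - 1))%N.
Proof.
rewrite card_prod card_option card_sig subn1 -card_prod -(cardC1 (0, 0)).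
by congr (_ * _)%N; apply: eq_card.
Qed.

Lemma card_line_mul : (#|{: line}| * #|F|.+1 = #|{: point}| * #|F|)%N.
Proof.
have := double_count incident.
under eq_bigr do rewrite card_incident_lines.
under [in RHS]eq_bigr do rewrite card_incident_points.
by rewrite !sum_nat_const => ->.
Qed.

Lemma card_vertex : #|{: vertex}| = ((2 * #|F| + 1) * (#|F| ^ 2 - 1))%N.
Proof.
have card_line : #|{: line}| = (#|F| * (#|F| * #|F| - 1))%N.
  apply/eqP; rewrite -(eqn_pmul2r (ltn0Sn #|F|)) card_line_mul card_point.
  by apply/eqP; ring.
rewrite card_sum card_point card_line; set r := (#|F| * #|F| - 1)%N.
ring.
Qed.

Lemma card_incidence_point p : #|[set y | incidence (inl p) y]| = #|F|.
Proof.
rewrite -(card_incident_lines p) -(card_imset _ (@inr_inj point line)).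
apply: eq_card => -[q|M]; rewrite inE /=.
  by apply/esym/imsetP => -[].
by rewrite mem_imset ?inE //; exact: inr_inj.
Qed.

Lemma card_incidence_line M : #|[set y | incidence (inr M) y]| = #|F|.+1.
Proof.
rewrite -(card_incident_points M) -(card_imset _ (@inl_inj point line)).
apply: eq_card => -[p|N]; rewrite inE /=.
  by rewrite mem_imset ?inE //; exact: inl_inj.
by apply/esym/imsetP => -[].
Qed.

Lemma incidence_cycle8 : exists c, [/\ 3 <= size c, ucycle incidence c & size c = 8]%N.
Proof.
have n10 : (1, 0) != (0, 0) :> F * F by rewrite xpair_eqE oner_eq0.
have n01 : (0, 1) != (0, 0) :> F * F by rewrite xpair_eqE oner_eq0 andbF.
have n11 : (1, 1) != (0, 0) :> F * F by rewrite xpair_eqE oner_eq0.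
have d1 : det_mx2 ((0, 1, 1, 0) : mx2 F) == -1 by apply/eqP; rewrite /=; ring.
have d2 : det_mx2 ((0, 1, 1, 1) : mx2 F) == -1 by apply/eqP; rewrite /=; ring.
have d3 : det_mx2 ((-1, 1, 0, 1) : mx2 F) == -1 by apply/eqP; rewrite /=; ring.
have d4 : det_mx2 ((-1, 1, 1, 0) : mx2 F) == -1 by apply/eqP; rewrite /=; ring.
pose mkp u w (nw : w != (0, 0)) : vertex := inl (u, exist _ w nw).
pose mkl M (dM : det_mx2 M == -1) : vertex := inr (exist _ M dM).
exists [:: mkp None _ n10; mkl _ d1; mkp (Some 0) _ n01; mkl _ d2;
           mkp None _ n11; mkl _ d3; mkp (Some 1) _ n01; mkl _ d4].
split => //; apply/andP; split.
  by rewrite /= /incident /= !(mulr0, mul0r, mulr1, mul1r, add0r, addr0, addNr) !eqxx.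
(* The zero patterns of the coordinates tell the eight vertices apart in any
   characteristic. *)
pose code (x : vertex) := match x with
  | inl (u, w) => [:: true; u == None; odflt 0 u == 0; (val w).1 == 0; (val w).2 == 0]
  | inr M => let: (a, b, c, d) := val M in [:: false; a == 0; b == 0; c == 0; d == 0]
  end.
apply: (@map_uniq _ _ code).
by rewrite /= !eqxx oner_eq0 oppr_eq0 oner_eq0.
Qed.

Lemma bbg_exists_incidence :
  bbg_exists #|F| #|F|.+1 8 ((2 * #|F| + 1) * (#|F| ^ 2 - 1)).
Proof.
rewrite -card_vertex; apply: (bbg_exists_finType (A := [set x | is_point x]))
  incidence_sym incidence_irr _ _ _ incidence_cycle8 _.
- by move=> x y; rewrite !inE; apply: incidence_side.
- by case=> [p|M]; rewrite inE // => _; exact: card_incidence_point.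
- by case=> [p|M]; rewrite !inE // => _; exact: card_incidence_line.
- exact: (C4_C6_free_girth_ge8 incidence_side incidence_C4_free incidence_C6_free).
Qed.

End IncidenceGraph.

Section BiregularC4C6Free.
Variables (n : nat) (e : rel 'I_n) (A : {set 'I_n}) (a b : nat).
Hypothesis e_sym : symmetric e.
Hypothesis e_side : forall x y, e x y -> (x \in A) != (y \in A).
Hypothesis degA : forall x, x \in A -> deg e x = a.
Hypothesis degB : forall x, x \notin A -> deg e x = b.
Hypothesis noC4 : C4_free e.
Hypothesis noC6 : C6_free e.

Definition nbhd x := [set y | e x y].

Lemma in_A_nbhd x y : e x y -> x \in A -> y \notin A.
Proof. by move/e_side; case: (x \in A); case: (y \in A). Qed.

Lemma notin_A_nbhd x y : e x y -> x \notin A -> y \in A.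
Proof. by move/e_side; case: (x \in A); case: (y \in A). Qed.

Lemma card_nbhdD1 x y : e x y -> #|nbhd y :\ x| = (deg e y).-1.
Proof. by move=> exy; rewrite /deg -/(nbhd y) [in RHS](cardsD1 x) inE e_sym exy. Qed.

Lemma biregular_count : #|A| * a = #|~: A| * b.
Proof.
have rowA x : #|[set y | (x \in A) && e x y]| = if x \in A then a else 0.
  case: ifP => xA; last by apply/eqP; rewrite cards_eq0; apply/eqP/setP => y; rewrite !inE.
  by rewrite -(degA xA); apply: eq_card => y; rewrite !inE.
have colA y : #|[set x | (x \in A) && e x y]| = if y \in ~: A then b else 0.
  rewrite inE; case: ifP => yA.
    rewrite -(degB yA); apply: eq_card => x; rewrite !inE e_sym.
    by apply/andP/idP => [[] | eyx] //; split => //; apply: notin_A_nbhd eyx yA.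
  apply/eqP; rewrite cards_eq0; apply/eqP/setP => x; rewrite !inE.
  by apply/andP => -[xA /in_A_nbhd /(_ xA)]; rewrite yA.
transitivity (\sum_x #|[set y | (x \in A) && e x y]|).
  by rewrite (eq_bigr _ (fun x _ => rowA x)) -big_mkcond sum_nat_const.
by rewrite double_count (eq_bigr _ (fun y _ => colA y)) -big_mkcond sum_nat_const.
Qed.

Lemma biregular_exists_A (x : 'I_n) : 0 < b -> exists L, L \in A.
Proof.
case: (boolP (x \in A)) => [xA | xNA]; first by exists x.
rewrite -(degB xNA) card_gt0 => /set0Pn[y]; rewrite inE => exy.
by exists y; apply: notin_A_nbhd exy xNA.
Qed.

Section Sphere3.
Variable L : 'I_n.
Hypothesis LA : L \in A.

Definition sphere3_part (p : 'I_n * 'I_n) : {set 'I_n} :=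
  if [&& e L p.1, e p.1 p.2 & p.2 != L] then nbhd p.2 :\ p.1 else set0.

Definition sphere3 := \bigcup_p sphere3_part p.

Lemma mem_sphere3_part p r :
  (r \in sphere3_part p) = [&& e L p.1, e p.1 p.2, p.2 != L, r != p.1 & e p.2 r].
Proof.
rewrite /sphere3_part; case: ifPn => [/and3P[-> -> ->] | Lp]; first by rewrite !inE.
by rewrite inE; apply/esym/and5P => -[eLq eqM ML _ _]; case/and3P: Lp.
Qed.

Lemma sphere3_part_disjoint p p' : p != p' -> [disjoint sphere3_part p & sphere3_part p'].
Proof.
case: p p' => [q M] [q' M'] pp'; apply: disjoint_setP => r.
rewrite !mem_sphere3_part /= => /and5P[eLq eqM ML rq eMr] /and5P[eLq' eqM' M'L rq' eM'r].
have [qq' | qq'] := eqVneq q q'; first subst q'.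
  have MM' : M != M' by apply: contraNneq pp' => ->.
  by apply: (noC4 eqM eMr _ _ _ MM'); rewrite 1?e_sym 1?eq_sym.
have [MM' | MM'] := eqVneq M M'; first subst M'.
  by apply: (noC4 eqM _ _ eLq qq' ML); rewrite 1?e_sym.
by apply: (noC6 eqM eMr _ _ _ eLq _ rq' qq' MM' M'L ML); rewrite 1?e_sym 1?eq_sym.
Qed.

Lemma card_sphere3 : #|sphere3| = a * (b.-1 * a.-1).
Proof.
rewrite card_disjoint_bigcup; last exact: sphere3_part_disjoint.
rewrite -(pair_big xpredT xpredT (fun q M => #|sphere3_part (q, M)|)) /=.
rewrite (bigID (e L)) /= [X in _ + X]big1 ?addn0 => [|q /negbTE Lq]; last first.
  by apply: big1 => M _; rewrite /sphere3_part Lq cards0.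
transitivity (\sum_(q | e L q) b.-1 * a.-1).
  apply: eq_bigr => q eLq; have qA := in_A_nbhd eLq LA.
  rewrite (bigID (fun M => e q M && (M != L))) /= [X in _ + X]big1 ?addn0 => [|M].
    transitivity (\sum_(M | e q M && (M != L)) a.-1).
      apply: eq_bigr => M /andP[eqM ML].
      by rewrite /sphere3_part /= eLq eqM ML (card_nbhdD1 eqM) (degA (notin_A_nbhd eqM qA)).
    rewrite sum_nat_const -(degB qA) -(card_nbhdD1 eLq); congr (_ * _).
    by apply: eq_card => M; rewrite !inE andbC.
  by rewrite /sphere3_part /= eLq => /negbTE ->; rewrite cards0.
rewrite sum_nat_const -(degA LA); congr (_ * _).
by apply: eq_card => q; rewrite !inE.
Qed.

Definition ball3 := nbhd L :|: sphere3.

Lemma card_ball3 : #|ball3| = a + a * (b.-1 * a.-1).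
Proof.
rewrite cardsU card_sphere3 [#|nbhd L|](degA LA).
suff -> : nbhd L :&: sphere3 = set0 by rewrite cards0 subn0.
apply/setP => r; rewrite !inE; apply/negbTE/andP => -[eLr /bigcupP[[q M] _]].
rewrite mem_sphere3_part /= => /and5P[eLq eqM ML rq eMr].
by apply: (noC4 eqM eMr _ eLq _ ML); rewrite 1?e_sym 1?eq_sym.
Qed.

Lemma ball3_subset : ball3 \subset ~: A.
Proof.
apply/subsetP => r; rewrite !inE => /orP[eLr | /bigcupP[[q M] _]].
  exact: in_A_nbhd eLr LA.
rewrite mem_sphere3_part /= => /and5P[eLq eqM _ _ eMr].
exact: in_A_nbhd eMr (notin_A_nbhd eqM (in_A_nbhd eLq LA)).
Qed.

Lemma moore_bound : a + a * (b.-1 * a.-1) <= #|~: A|.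
Proof. by rewrite -card_ball3 subset_leq_card // ball3_subset. Qed.

Lemma moore_tight_sphere3 x : #|~: A| = a + a * (b.-1 * a.-1) ->
  x \notin A -> ~~ e L x -> exists q M, [&& e L q, e q M, M != L, x != q & e M x].
Proof.
move=> tight xA Lx.
have : x \in ball3.
  have /subset_cardP eq_ball3 : #|ball3| = #|~: A| by rewrite card_ball3 tight.
  by rewrite (eq_ball3 ball3_subset) inE.
rewrite !inE (negbTE Lx) /= => /bigcupP[[q M] _].
by rewrite mem_sphere3_part => ?; exists q, M.
Qed.

End Sphere3.

Local Ltac by_sym := first [done | by rewrite e_sym | by rewrite eq_sym].

Definition collinear x y := [&& x \notin A, x != y & [exists M, e x M && e M y]].

Lemma collinearP x y :
  reflect (exists M, [/\ x \notin A, x != y, e x M & e M y]) (collinear x y).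
Proof.
apply: (iffP and3P) => [[xA xy /existsP[M /andP[exM eMy]]] | [M [xA xy exM eMy]]].
  by exists M.
by split => //; apply/existsP; exists M; rewrite exM.
Qed.

Lemma collinear_notin_A x y : collinear x y -> y \notin A.
Proof. by case/collinearP => M [xA _ exM eMy]; exact: in_A_nbhd eMy (notin_A_nbhd exM xA). Qed.

Lemma collinear_sym x y : collinear x y = collinear y x.
Proof.
by apply/idP/idP => cxy; have yA := collinear_notin_A cxy;
  case/collinearP: cxy => M [xA xy exM eMy]; apply/collinearP; exists M;
  split; by_sym.
Qed.

Lemma collinear_nbhd_uniq M x z z' : ~~ e M x -> e M z -> e M z' ->
  collinear x z -> collinear x z' -> z = z'.
Proof.
move=> Mx eMz eMz' /collinearP[M1 [xA xz exM1 eM1z]] /collinearP[M2 [_ xz' exM2 eM2z']].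
apply/eqP/negP => /negP zz'.
have M1M : M1 != M by apply: contraNneq Mx => <-; rewrite e_sym.
have MM2 : M != M2 by apply: contraNneq Mx => ->; rewrite e_sym.
have [M12 | M12] := eqVneq M1 M2; first subst M2.
  by apply: (noC4 (a := z) (b := M) (c := z') (d := M1)); by_sym.
by apply: (noC6 (a := x) (b := M1) (c := z) (d := M) (f := z') (g := M2)); by_sym.
Qed.

Lemma card_collinear x : x \notin A -> #|[set z | collinear x z]| = b * a.-1.
Proof.
move=> xA; pose line_of M := if e x M then nbhd M :\ x else set0.
have -> : [set z | collinear x z] = \bigcup_M line_of M.
  apply/setP => z; rewrite inE; apply/collinearP/bigcupP.
    by case=> M [_ xz exM eMz]; exists M => //; rewrite /line_of exM !inE eq_sym xz.
  case=> M _; rewrite /line_of; case: ifP => exM; last by rewrite inE.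
  by rewrite !inE => /andP[zx eMz]; exists M; split => //; rewrite eq_sym.
rewrite card_disjoint_bigcup => [|M M' MM']; last first.
  apply: disjoint_setP => z; rewrite /line_of.
  case: ifP => exM; last by rewrite inE.
  case: ifP => exM'; last by move=> _; rewrite inE.
  rewrite !inE => /andP[zx eMz] /andP[_ eM'z].
  by apply: (noC4 (a := x) (b := M) (c := z) (d := M')); by_sym.
rewrite (bigID (e x)) /= [X in _ + X]big1 ?addn0 => [|M /negbTE xM]; last first.
  by rewrite /line_of xM cards0.
transitivity (\sum_(M | e x M) a.-1).
  apply: eq_bigr => M exM.
  by rewrite /line_of exM (card_nbhdD1 exM) (degA (notin_A_nbhd exM xA)).
rewrite sum_nat_const -(degB xA); congr (_ * _).
by apply: eq_card => M; rewrite !inE.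
Qed.

Definition ncommon x y := #|[set z | collinear x z && collinear z y]|.

Lemma ncommon_diag x : x \notin A -> ncommon x x = b * a.-1.
Proof.
move=> xA; rewrite /ncommon -(card_collinear xA); apply: eq_card => z.
by rewrite !inE (collinear_sym z x) andbb.
Qed.

Lemma ncommon_collinear x y : collinear x y -> ncommon x y = a.-2.
Proof.
case/collinearP => K [xA xy exK eKy]; have KA := notin_A_nbhd exK xA; rewrite /ncommon.
have -> : [set z | collinear x z && collinear z y] = nbhd K :\ x :\ y.
  apply/setP => z; rewrite !inE; apply/andP/and3P.
    case=> /collinearP[M1 [_ xz exM1 eM1z]] /collinearP[M2 [zA zy ezM2 eM2y]].
    split => //; first by rewrite eq_sym.
    apply/negP => /negP Kz.
    have M1K : M1 != K by apply: contraNneq Kz => <-.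
    have KM2 : K != M2 by apply: contraNneq Kz => ->; rewrite e_sym.
    have [M12 | M12] := eqVneq M1 M2; first subst M2.
      by apply: (noC4 (a := x) (b := K) (c := y) (d := M1)); by_sym.
    by apply: (noC6 (a := x) (b := K) (c := y) (d := M2) (f := z) (g := M1)); by_sym.
  case=> zy zx eKz; split; apply/collinearP; exists K.
    by split; rewrite // eq_sym.
  by split => //; [exact: in_A_nbhd eKz KA | rewrite e_sym].
have := cardsD1 y (nbhd K :\ x).
by rewrite (card_nbhdD1 exK) (degA KA) !inE eq_sym xy eKy => ->.
Qed.

Section MooreTight.
Hypothesis tight : #|~: A| = a + a * (b.-1 * a.-1).

Lemma tight_collinear L x : L \in A -> x \notin A -> ~~ e L x ->
  exists2 q, e L q & collinear q x.
Proof.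
move=> LA xA Lx; have [q [M /and5P[eLq eqM ML xq eMx]]] := moore_tight_sphere3 LA tight xA Lx.
exists q => //; apply/collinearP; exists M; split; rewrite 1?eq_sym //.
exact: in_A_nbhd eLq LA.
Qed.

Lemma ncommon_not_collinear x y : x \notin A -> y \notin A -> x != y ->
  ~~ collinear x y -> ncommon x y = b.
Proof.
move=> xA yA xy cxy.
have Mx M : e y M -> ~~ e M x.
  by move=> eyM; apply: contra cxy => eMx; apply/collinearP; exists M; split; by_sym.
pose g M := odflt x [pick z | e M z && collinear x z].
have gP M : e y M -> e M (g M) && collinear x (g M).
  move=> eyM; have [q eMq cqx] := tight_collinear (notin_A_nbhd eyM yA) xA (Mx M eyM).
  by rewrite /g; case: pickP => [z // | /(_ q)]; rewrite eMq collinear_sym cqx.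
rewrite /ncommon -(degB yA) /deg -/(nbhd y) -(card_in_imset (f := g) (D := nbhd y)) => [|M M'].
  apply: eq_card => z; rewrite inE; apply/andP/imsetP.
    case=> cxz /collinearP[M [zA zy ezM eMy]].
    have eyM : e y M by rewrite e_sym.
    exists M; first by rewrite inE.
    case/andP: (gP M eyM) => eMg cxg.
    by apply: (collinear_nbhd_uniq (Mx M eyM)) => //; rewrite e_sym.
  case=> M; rewrite inE => eyM ->; case/andP: (gP M eyM) => eMg cxg.
  split => //; apply/collinearP; exists M; split; rewrite 1?e_sym //.
  - exact: in_A_nbhd eMg (notin_A_nbhd eyM yA).
  - by apply: contraNneq cxy => <-.
rewrite !inE => eyM eyM' gMM'; apply/eqP/negP => /negP MM'.
case/andP: (gP M eyM) => eMg _; case/andP: (gP M' eyM') => eM'g _.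
have gy : g M != y by apply: contraNneq cxy => <-; case/andP: (gP M eyM).
apply: (noC4 (a := y) (b := M) (c := g M) (d := M')) => //.
- by rewrite gMM' e_sym.
- by rewrite e_sym.
- by rewrite eq_sym.
Qed.

Section CollinearityMatrix.
Local Open Scope ring_scope.

Let v (i : 'I_#|~: A|) : 'I_n := enum_val i.

Lemma v_notin_A i : v i \notin A.
Proof. by have := enum_valP i; rewrite in_setC. Qed.

Definition collinear_mx : 'M[rat]_#|~: A| := \matrix_(i, j) (collinear (v i) (v j))%:R.
Definition ones_mx : 'M[rat]_#|~: A| := const_mx 1.

Lemma collinear_mx_sqr : collinear_mx *m collinear_mx =
  (b * a.-1)%:R *: 1%:M + a.-2%:R *: collinear_mx + b%:R *: (ones_mx - 1%:M - collinear_mx).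
Proof.
apply/matrixP => i l; rewrite !mxE.
transitivity ((ncommon (v i) (v l))%:R : rat).
  rewrite /ncommon -(sum_enum_val_card (S := ~: A)) => [|z /andP[/collinear_notin_A]]; last by rewrite inE.
  by rewrite natr_sum; apply: eq_bigr => j _; rewrite !mxE -natrM mulnb.
have [<- | il] := eqVneq i l.
  by rewrite /collinear eqxx andbF ncommon_diag ?v_notin_A //=; ring.
have vil : v i != v l by apply: contra il => /eqP /enum_val_inj ->.
case: (boolP (collinear (v i) (v l))) => cil; first by rewrite ncommon_collinear //=; ring.
by rewrite ncommon_not_collinear ?v_notin_A //=; ring.
Qed.

Lemma collinear_mx_ones : collinear_mx *m ones_mx = (b * a.-1)%:R *: ones_mx.
Proof.
apply/matrixP => i l; rewrite !mxE -(card_collinear (v_notin_A i)) mulr1.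
rewrite -(sum_enum_val_card (S := ~: A)) => [|z /collinear_notin_A]; last by rewrite inE.
by rewrite natr_sum; apply: eq_bigr => j _; rewrite !mxE mulr1.
Qed.

Lemma ones_collinear_mx : ones_mx *m collinear_mx = (b * a.-1)%:R *: ones_mx.
Proof.
apply/matrixP => i l; rewrite !mxE -(card_collinear (v_notin_A l)) mulr1.
rewrite -(sum_enum_val_card (S := ~: A)) => [|z /collinear_notin_A]; last by rewrite inE.
by rewrite natr_sum; apply: eq_bigr => j _; rewrite !mxE mul1r collinear_sym.
Qed.

Lemma ones_mx_sqr : ones_mx *m ones_mx = #|~: A|%:R *: ones_mx.
Proof.
apply/matrixP => i l; rewrite !mxE.
under eq_bigr do rewrite !mxE mulr1.
by rewrite sumr_const card_ord mulr1.
Qed.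

End CollinearityMatrix.

(* [P / 35] is the projection onto the eigenspace of [collinear_mx] for the
   eigenvalue 1 orthogonal to the all-ones vector; that eigenvalue would have
   multiplicity [tr (P / 35) = 504 / 35]. *)
Lemma tight_not_3_4 : a = 3 -> b = 4 -> False.
Proof.
move=> a3 b4; have cardB : (#|~: A|%:R = 21%:R :> rat)%R by rewrite tight a3 b4.
pose P := (7%:R *: collinear_mx + 28%:R *: 1%:M - 4%:R *: ones_mx)%R.
have PP : (P *m P = 35%:R *: P)%R.
  rewrite /P !(mulmxDl, mulmxDr, mulmxN, mulNmx) -!scalemxAl -!scalemxAr !mul1mx !mulmx1.
  rewrite collinear_mx_sqr collinear_mx_ones ones_collinear_mx ones_mx_sqr cardB a3 b4.
  by apply/matrixP => i j; rewrite !mxE /=; ring.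
have trP : (\tr P = 504%:R)%R.
  rewrite /mxtrace (eq_bigr (fun _ => 24%:R)%R) => [|i _].
    by rewrite sumr_const card_ord tight a3 b4 /=; ring.
  by rewrite !mxE eqxx /collinear eqxx andbF /=; ring.
have n35 : (35%:R != 0 :> rat)%R by rewrite pnatr_eq0.
pose E := (35%:R^-1 *: P)%R.
have /mxtrace_idempotent : (E *m E = E)%R.
  by rewrite /E -scalemxAl -scalemxAr PP !scalerA (mulfVK n35).
rewrite /E mxtraceZ trP => /(congr1 (fun x => 35%:R * x)%R).
by rewrite (mulVKf n35) -natrM => /eqP; rewrite eqr_nat => /eqP; lia.
Qed.

End MooreTight.

End BiregularC4C6Free.

Lemma bbg_3_4_8_order_ge56 m : bbg_exists 3 4 8 m -> 56 <= m.
Proof.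
move=> [e [[e_sym _] [[A [e_side [degA degB]]] [[[|x c] [_ c_size]] girth]]]] //.
have g8 : girth_ge8 e by move=> c' c'_ge3 c'_cycle; apply: girth.
have noC4 := girth_ge8_C4_free e_side g8.
have noC6 := girth_ge8_C6_free e_side g8.
have [L LA] := biregular_exists_A e_side degB x isT.
have count := biregular_count e_sym e_side degA degB.
have moore : 21 <= #|~: A| := moore_bound e_sym e_side degA degB noC4 noC6 LA.
have not_tight : #|~: A| != 21.
  by apply/eqP => tight; apply: (tight_not_3_4 e_sym e_side degA degB noC4 noC6 tight).
by move: (cardsC A); rewrite card_ord; lia.
Qed.

Theorem mainTheorem9 :
  (forall q : nat, prime_power q ->
     bbg_exists q q.+1 8 ((2 * q + 1) * (q ^ 2 - 1))) /\
  Bc_is 3 4 8 56.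
Proof.
have bbg_q q : prime_power q -> bbg_exists q q.+1 8 ((2 * q + 1) * (q ^ 2 - 1)).
  move=> [p [k [p_prime [k_gt0 ->]]]].
  have [F _ cardF] := pPrimePowerField p_prime k_gt0.
  by rewrite -cardF; exact: bbg_exists_incidence.
split=> //; split; last exact: bbg_3_4_8_order_ge56.
by apply: (bbg_q 3); exists 3, 1.
Qed.
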